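(* Let $A$ be the filtered boundary matrix of a Morse decomposition with respect to an admissible enumeration $\sigma_1,\dots,\sigma_n$ (see context), and let $A_{out}$ be the matrix obtained after the column-reduction phase of ConMat. Then $A_{out}$ satisfies: (R1) the map $J_h(A_{out})\ni j\mapsto\mathrm{low}_{A_{out}}(j)\in J_t(A_{out})$ is a well-defined bijection; (R2) $J_h(A_{out})\cap J_t(A_{out})=\emptyset$; (R3) if $A_{out}[i,j]=1$ for some $i\le\mathrm{low}_{A_{out}}(j)$, then there is no $s\in J_h(A_{out})$ with $s<j$ and $\mathrm{low}_{A_{out}}(s)=i$.
   Context: $K$ is a finite simplicial complex ($\tau\le\sigma$: $\tau$ is a face of $\sigma$; $\mathrm{cl}(\sigma)=\{\tau:\tau\le\sigma\}$). A multivector field $\mathcal V$ on $K$ is a partition of $K$ into convex sets $V$ (if $\sigma,\tau\in V$ and $\sigma\le\mu\le\tau$ then $\mu\in V$); $[\sigma]_{\mathcal V}$ is the part containing $\sigma$, $F_{\mathcal V}(\sigma)=[\sigma]_{\mathcal V}\cup\mathrm{cl}(\sigma)$, and a path is a sequence $\sigma_1,\dots,\sigma_r$ with $\sigma_k\in F_{\mathcal V}(\sigma_{k-1})$. A Morse decomposition indexed by a finite poset $(P,\le_P)$ is a partition $K=\bigsqcup_{p\in P}M_p$ such that every path from $M_p$ to $M_q$ has $q\le_P p$; $[\sigma]_P$ is the $p$ with $\sigma\in M_p$. An admissible enumeration is $\sigma_1,\dots,\sigma_n$ of all simplices of $K$ such that (a) for some linear extension $\le_{lin}$ of $\le_P$,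 $i\le j\Rightarrow[\sigma_i]_P\le_{lin}[\sigma_j]_P$; (b) if $\sigma_i$ is a proper face of $\sigma_j$ then $i<j$. The filtered boundary matrix $A$ is the $n\times n$ $\mathbb Z_2$-matrix with $A[i,j]=1$ iff $\sigma_i$ is a codimension-one face of $\sigma_j$; row/column $i$ represents $\sigma_i$. For a nonzero column $j$ of such a matrix $B$, $\mathrm{low}_B(j)$ is the largest $i$ with $B[i,j]=1$. Column (and row) $j$ is homogeneous if nonzero and $\sigma_j$, $\sigma_{\mathrm{low}_B(j)}$ are in the same Morse set; then index $\mathrm{low}_B(j)$ is targetable. $J_h(B)$, $J_t(B)$: sets of homogeneous, targetable indices. ConMat reduction phase on $A$ (in place): for $j=1,\dots,n$: for $i=\mathrm{low}_A(j)$ down to $1$: if $A[i,j]=1$ and some column $s<j$ of the current matrix is homogeneous with $\mathrm{low}_A(s)=i$, add column $s$ to column $j$ (mod 2). $A_{out}$ is the matrix after the outer loop. *)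

From HB Require Import structures.
From mathcomp Require Import all_boot all_order all_algebra.
Set Implicit Arguments. Unset Strict Implicit. Unset Printing Implicit Defensive.
Import GRing.Theory.
Local Open Scope ring_scope.

Section Defs.
Variable V : finType.

Definition simplicial_complex (K : {set {set V}}) : Prop :=
  set0 \notin K /\
  (forall sigma tau : {set V}, sigma \in K -> tau \subset sigma ->
       tau != set0 -> tau \in K).

Definition cl (K : {set {set V}}) (sigma : {set V}) : {set {set V}} :=
  [set tau in K | tau \subset sigma].

Definition codim1_face (tau sigma : {set V}) : bool :=
  (tau \subset sigma) && (#|sigma| == #|tau|.+1)%N.

Definition convex_in (W : {set {set V}}) : Prop :=
  forall sigma tau mu : {set V}, sigma \in W -> tau \in W ->
    sigma \subset mu -> mu \subset tau -> mu \in W.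

Definition multivector_field (K : {set {set V}}) (Vs : {set {set {set V}}})
  : Prop := partition Vs K /\ (forall W, W \in Vs -> convex_in W).

Definition Fmv (K : {set {set V}}) (Vs : {set {set {set V}}}) (sigma : {set V})
  : {set {set V}} := pblock Vs sigma :|: cl K sigma.

Definition mv_path (K : {set {set V}}) (Vs : {set {set {set V}}}) (x : {set V}) (s : seq {set V}) : bool :=
  path (fun a b => b \in Fmv K Vs a) x s.

Definition partial_order (P : finType) (le : rel P) : Prop :=
  reflexive le /\ antisymmetric le /\ transitive le.

(** Morse decomposition indexed by the poset (P, leP): the Morse set of a
    simplex sigma in K is M_{mp sigma}; i.e. M_p = [set sigma in K | mp sigma == p]. *)
Definition morse_decomposition (K : {set {set V}}) (Vs : {set {set {set V}}}) (P : finType) (leP : rel P)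
    (mp : {set V} -> P) : Prop :=
  forall (x : {set V}) (s : seq {set V}),
    x \in K -> mv_path K Vs x s -> leP (mp (last x s)) (mp x).

Definition linear_extension (P : finType) (leP lelin : rel P) : Prop :=
  partial_order lelin /\ total lelin /\ (forall p q, leP p q -> lelin p q).

(** enumeration e : 'I_n -> simplices; index 0-based (i stands for sigma_{i+1}) *)
Definition admissible_enumeration (K : {set {set V}}) (P : finType) (leP : rel P)
    (mp : {set V} -> P) (n : nat) (e : 'I_n -> {set V}) : Prop :=
  [/\ (forall i, e i \in K), injective e,
      (forall sigma, sigma \in K -> exists i, e i = sigma),
      (exists lelin : rel P, linear_extension leP lelin /\
         (forall i j : 'I_n, (i <= j)%N -> lelin (mp (e i)) (mp (e j))))
    & (forall i j : 'I_n, e i \proper e j -> (i < j)%N)].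

Variable n : nat.
Variable e : 'I_n -> {set V}.
Variable P : finType.
Variable mp : {set V} -> P.

Definition boundary_matrix : 'M['F_2]_n :=
  \matrix_(i, j) (if codim1_face (e i) (e j) then 1 else 0).

Definition low (B : 'M['F_2]_n) (j : 'I_n) : option 'I_n :=
  [pick i : 'I_n | (B i j != 0) && [forall k : 'I_n, (i < k)%N ==> (B k j == 0)]].

Definition homogeneous (B : 'M['F_2]_n) (j : 'I_n) : bool :=
  if low B j is Some i then mp (e i) == mp (e j) else false.

Definition Jh (B : 'M['F_2]_n) : {set 'I_n} := [set j | homogeneous B j].
Definition Jt (B : 'M['F_2]_n) : {set 'I_n} :=
  [set i | [exists j, homogeneous B j && (low B j == Some i)]].

Definition add_col (B : 'M['F_2]_n) (s j : 'I_n) : 'M['F_2]_n :=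
  \matrix_(a, b) (if b == j then B a j + B a s else B a b).

Definition inner_step (j : 'I_n) (B : 'M['F_2]_n) (i : 'I_n) : 'M['F_2]_n :=
  if B i j == 1 then
    if [pick s : 'I_n | (s < j)%N && homogeneous B s && (low B s == Some i)]
       is Some s then add_col B s j else B
  else B.

Definition reduce_column (B : 'M['F_2]_n) (j : 'I_n) : 'M['F_2]_n :=
  if low B j is Some l then
    foldl (inner_step j) B [seq i <- rev (enum 'I_n) | (nat_of_ord i <= nat_of_ord l)%N]
  else B.

Definition conmat_reduction (A : 'M['F_2]_n) : 'M['F_2]_n :=
  foldl reduce_column A (enum 'I_n).

End Defs.

From mathcomp Require Import all_boot all_algebra.

(* ConMat only ever adds a column s to a later column j, so the reduced matrix
   is Aout = A U and A = Aout W with U, W upper unitriangular.  The inner loop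
   clears, from the pivot of column j downwards, every entry lying at the
   pivot row of an earlier homogeneous column; later iterations never touch
   column j or the columns before it, so this holds in Aout (R3), and it makes
   the pivot map injective on J_h (R1).
   For (R2), let j be homogeneous with pivot i, and be the pivot row of a
   column k.  As A A = 0, the identities above write column j of Aout as a sum
   of earlier columns.  Morse sets are intervals of an admissible enumeration,
   so the earlier columns with entries in the Morse set of j are homogeneous
   columns of that Morse set; the one with the highest pivot puts its pivot
   into column j, hence at row i, contradicting (R3). *)
Set Implicit Arguments. Unset Strict Implicit. Unset Printing Implicit Defensive.
Import GRing.Theory.
Local Open Scope ring_scope.

Lemma F2_neq0 (x : 'F_2) : x != 0 -> x = 1.
Proof. by case: x => -[|[|//]] ? nz; apply: val_inj. Qed.

Lemma F2_addxx (x : 'F_2) : x + x = 0.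
Proof. by apply: addrr_pchar2; apply: pchar_Fp. Qed.

Section Unitriangular.
Variables (R : pzRingType) (n : nat).
Implicit Types M N : 'M[R]_n.

Definition upper_unitri M : Prop :=
  forall a b : 'I_n, (b <= a)%N -> M a b = (a == b)%:R.

Lemma upper_unitri1 : upper_unitri 1%:M.
Proof. by move=> a b _; rewrite mxE. Qed.

Lemma upper_unitri_lt M (a b : 'I_n) : upper_unitri M -> (b < a)%N -> M a b = 0.
Proof. by move=> uM lt_ba; rewrite uM ?(ltnW lt_ba) // (negbTE (_ : a != b)) // neq_ltn lt_ba orbT. Qed.

Lemma upper_unitri_mul M N : upper_unitri M -> upper_unitri N -> upper_unitri (M *m N).
Proof.
move=> uM uN a b le_ba; rewrite mxE (bigD1 a) //= uM // uN // eqxx mul1r.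
rewrite big1 ?addr0 // => c neq_ca; case: (ltngtP c a) => [lt_ca | lt_ac | /val_inj eq_ca].
- by rewrite uM ?(ltnW lt_ca) // eq_sym (negbTE neq_ca) mul0r.
- have lt_bc := leq_ltn_trans le_ba lt_ac.
  by rewrite (uN c b) ?(ltnW lt_bc) // (negbTE (_ : c != b)) ?mulr0 // neq_ltn lt_bc orbT.
- by rewrite eq_ca eqxx in neq_ca.
Qed.

End Unitriangular.

Section Low.
Variable n : nat.
Implicit Types (B C : 'M['F_2]_n) (j : 'I_n).

Variant low_spec B j : option 'I_n -> Type :=
  | LowNone of (forall k, B k j = 0) : low_spec B j None
  | LowSome l of B l j = 1 & (forall k : 'I_n, (l < k)%N -> B k j = 0) :
      low_spec B j (Some l).

Lemma lowP B j : low_spec B j (low B j).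
Proof.
rewrite /low; case: pickP => [l /andP[/F2_neq0 Blj /forallP above] | no_low].
  by constructor => // k lt_lk; apply/eqP; exact: implyP (above k) lt_lk.
constructor => k; apply/eqP/contraT => Bkj.
have [i Bij max_i] := @arg_maxnP _ k (fun i => B i j != 0) val Bkj.
have := no_low i; rewrite /= Bij /= => /negbT/forallPn[l].
by rewrite negb_imply => /andP[lt_il /max_i]; rewrite /= leqNgt lt_il.
Qed.

Lemma low_entry B j l : low B j = Some l -> B l j = 1.
Proof. by case: lowP => // ? ? _ [<-]. Qed.

Lemma entry_above_low B j l (k : 'I_n) : low B j = Some l -> (l < k)%N -> B k j = 0.
Proof. by case: lowP => // ? _ above [<-]; apply: above. Qed.

Lemma low_ge_entry B j r : B r j != 0 -> exists2 l, low B j = Some l & (r <= l)%N.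
Proof.
move=> Brj; case: lowP => [/(_ r) Br0 | l _ above]; first by rewrite Br0 eqxx in Brj.
by exists l => //; rewrite leqNgt; apply: contra Brj => /above ->.
Qed.

Lemma eq_low B C j : (forall a, B a j = C a j) -> low B j = low C j.
Proof.
by move=> BC; apply: eq_pick => i /=; rewrite BC; congr (_ && _); apply: eq_forallb => k; rewrite BC.
Qed.

End Low.

Section Boundary.
Variables (V : finType) (n : nat) (e : 'I_n -> {set V}).

Lemma codim1_face2P (A C S : {set V}) :
  A \subset C -> #|C| = #|A|.+2 ->
  reflect (exists2 z, z \in C :\: A & S = z |: A)
          (codim1_face A S && codim1_face S C).
Proof.
move=> sAC cardC; apply: (iffP andP) => [[/andP[sAS /eqP cardS] /andP[sSC _]] | [z]].
  have /cards1P[z defD] : #|S :\: A| == 1%N by rewrite cardsDS // cardS subSnn.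
  have /setDP[zS zA] : z \in S :\: A by rewrite defD set11.
  exists z; first by rewrite inE zA (subsetP sSC).
  by rewrite -{1}(setID S A) defD (setIidPr sAS) setUC.
move=> /setDP[zC zA] ->; rewrite /codim1_face subsetUr subUset sub1set zC sAC.
by rewrite cardsU1 zA cardC add1n !eqxx.
Qed.

Lemma boundary_strict_upper :
  (forall i j : 'I_n, e i \proper e j -> (i < j)%N) ->
  forall r c, boundary_matrix e r c != 0 -> (r < c)%N.
Proof.
move=> proper_lt r c; rewrite mxE /codim1_face.
case: andP => [[sub /eqP card] _ | _]; last by rewrite eqxx.
by apply: proper_lt; rewrite properEcard sub card ltnSn.
Qed.

Lemma boundary_mulmx_self (K : {set {set V}}) :
  simplicial_complex K -> (forall i, e i \in K) -> injective e ->
  (forall sigma, sigma \in K -> exists i, e i = sigma) ->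
  boundary_matrix e *m boundary_matrix e = 0.
Proof.
move=> [_ closedK] eK inj_e onto_e; apply/matrixP => a c; rewrite !mxE.
have mul_ind (p q : bool) : (if p then 1 else 0) * (if q then 1 else 0) = (p && q)%:R :> 'F_2.
  by case: p; case: q; rewrite ?mulr1 ?mulr0.
under eq_bigr => b _ do rewrite !mxE mul_ind.
have [/andP[sac /eqP cardc] | not2] := boolP ((e a \subset e c) && (#|e c| == #|e a|.+2)); last first.
  rewrite big1 // => b _; case: andP => // -[/andP[sab /eqP cardb] /andP[sbc /eqP cardc]].
  by move: not2; rewrite (subset_trans sab sbc) cardc cardb eqxx.
have /cards2P[x [y [neq_xy defD]]] : #|e c :\: e a| == 2 by rewrite cardsDS // cardc -addn2 addKn.
have face_of z : z \in e c :\: e a -> exists i, e i = z |: e a.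
  move=> /setDP[zc za]; apply/onto_e/(closedK (e c)); first exact: eK.
    by rewrite subUset sub1set zc sac.
  by apply/set0Pn; exists z; rewrite setU11.
have [[b1 eb1] [b2 eb2]] : (exists i, e i = x |: e a) /\ (exists i, e i = y |: e a).
  by split; apply: face_of; rewrite defD !inE eqxx ?orbT.
have chainE b : codim1_face (e a) (e b) && codim1_face (e b) (e c) = (b == b1) || (b == b2).
  apply/(codim1_face2P _ sac cardc)/orP => [[z] | [] /eqP ->].
    by rewrite defD !inE => /orP[] /eqP -> ezb; [left | right]; apply/eqP/inj_e; rewrite ezb.
  by exists x; rewrite // defD set21.
  by exists y; rewrite // defD set22.
have neq_b : b2 != b1.
  have /setDP[_ xa] : x \in e c :\: e a by rewrite defD set21.
  apply: contra_neq neq_xy => eq_b; have : x \in e b2 by rewrite eq_b eb1 setU11.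
  by rewrite eb2 !inE (negbTE xa) orbF => /eqP.
under eq_bigr => b _ do rewrite chainE.
rewrite (bigD1 b1) //= (bigD1 b2) //= big1 => [|b /andP[/negbTE-> /negbTE->] //].
by rewrite eqxx (negbTE neq_b) eqxx addr0 F2_addxx.
Qed.
End Boundary.

Section Reduction.
Variables (V : finType) (n : nat) (e : 'I_n -> {set V}) (P : finType) (mp : {set V} -> P).
Implicit Types (A B C : 'M['F_2]_n) (j : 'I_n).

Lemma eq_homogeneous B C j :
  (forall a, B a j = C a j) -> homogeneous e mp B j = homogeneous e mp C j.
Proof. by move=> BC; rewrite /homogeneous (eq_low BC). Qed.

Definition no_earlier_pivot B j (r : 'I_n) : Prop :=
  ~ exists s : 'I_n, [/\ (s < j)%N, homogeneous e mp B s & low B s = Some r].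

Definition reduced_col B j : Prop :=
  forall r, B r j = 1 -> no_earlier_pivot B j r.

Lemma eq_no_earlier_pivot B C j r :
  (forall b : 'I_n, (b < j)%N -> forall a, B a b = C a b) ->
  no_earlier_pivot B j r -> no_earlier_pivot C j r.
Proof.
move=> BC noB [s [lt_sj homC lowC]]; apply: noB; exists s.
by rewrite (eq_homogeneous (BC s lt_sj)) (eq_low (BC s lt_sj)).
Qed.

Lemma eq_reduced_col B C j :
  (forall b : 'I_n, (b <= j)%N -> forall a, B a b = C a b) ->
  reduced_col B j -> reduced_col C j.
Proof.
move=> BC redB r; rewrite -BC // => /redB; apply: eq_no_earlier_pivot => b lt_bj.
exact/BC/ltnW.
Qed.

Lemma inner_step_col j C i b a : b != j -> inner_step e mp j C i a b = C a b.
Proof.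
move=> /negbTE neq_bj; rewrite /inner_step.
by case: ifP => // _; case: pickP => // s _; rewrite mxE neq_bj.
Qed.

Lemma inner_step_reduces j C (i : 'I_n) :
  (forall r : 'I_n, (i < r)%N -> C r j = 1 -> no_earlier_pivot C j r) ->
  forall r : 'I_n, (i <= r)%N -> inner_step e mp j C i r j = 1 ->
  no_earlier_pivot C j r.
Proof.
move=> redC r; rewrite leq_eqVlt => /orP[/eqP/val_inj <- | lt_ir]; last first.
  rewrite /inner_step; case: ifP => _; last exact: redC.
  case: pickP => [s /andP[_ /eqP lows] | _]; last exact: redC.
  by rewrite mxE eqxx (entry_above_low lows lt_ir) addr0; apply: redC.
rewrite /inner_step; case: ifP => [/eqP Cij | /negbT/eqP Cij_neq1 /Cij_neq1 //].
case: pickP => [s /andP[_ /eqP lows] | no_pivot _ [s [lt_sj hom_s lows]]].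
  by rewrite mxE eqxx Cij (low_entry lows) F2_addxx => /esym/eqP; rewrite oner_eq0.
by have := no_pivot s; rewrite lt_sj hom_s lows eqxx.
Qed.

Lemma inner_loop_col j L C b a :
  b != j -> foldl (inner_step e mp j) C L a b = C a b.
Proof. by move=> neq_bj; elim: L C => //= i L IH C; rewrite IH inner_step_col. Qed.

Lemma inner_loop_reduces j L t C :
  map val L = rev (iota 0 t) ->
  (forall r : 'I_n, (t <= r)%N -> C r j = 1 -> no_earlier_pivot C j r) ->
  reduced_col (foldl (inner_step e mp j) C L) j.
Proof.
elim: L t C => [|i L IH] [|t] C; first by move=> _ redC r; apply: redC.
- by move/(congr1 size); rewrite size_rev size_iota.
- by move/(congr1 size); rewrite size_rev.
have -> : iota 0 t.+1 = iota 0 t ++ [:: t] by rewrite -addn1 iotaD.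
rewrite rev_cat /= => -[<- val_L] redC; apply: (IH i) => // r le_ir.
move/(inner_step_reduces redC) => /(_ le_ir); apply: eq_no_earlier_pivot => b lt_bj a.
by rewrite inner_step_col // neq_ltn lt_bj.
Qed.

Lemma val_rev_enum_le (l : 'I_n) :
  map val [seq i : 'I_n <- rev (enum 'I_n) | (i <= l)%N] = rev (iota 0 l.+1).
Proof.
rewrite (_ : map val _ = [seq x <- map val (rev (enum 'I_n)) | (x <= l)%N]).
  by rewrite map_rev val_enum_ord filter_rev (@filter_iota_leq n 0 l).
exact/esym/filter_map.
Qed.

Lemma reduce_column_col B j b a : b != j -> reduce_column e mp B j a b = B a b.
Proof. by move=> neq_bj; rewrite /reduce_column; case: (low B j) => // l; apply: inner_loop_col. Qed.

Lemma reduce_column_reduced B j : reduced_col (reduce_column e mp B j) j.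
Proof.
rewrite /reduce_column; case: lowP => [Bj0 r | l _ above].
  by rewrite Bj0 => /esym/eqP; rewrite oner_eq0.
by apply: inner_loop_reduces (val_rev_enum_le l) _ => r /above ->.
Qed.

Lemma outer_loop_reduced L t B :
  map val L = iota t (n - t) ->
  (forall j : 'I_n, (j < t)%N -> reduced_col B j) ->
  forall j, reduced_col (foldl (reduce_column e mp) B L) j.
Proof.
elim: L t B => [|i L IH] t B /=.
  move/(congr1 size); rewrite size_iota => /esym/eqP; rewrite subn_eq0 => le_nt redB j.
  exact/redB/(leq_trans (ltn_ord j)).
case def_nt: (n - t)%N => [|k] //= [val_i val_L] redB.
apply: (IH t.+1); first by rewrite subnS def_nt.
move=> j; rewrite ltnS leq_eqVlt => /orP[/eqP j_t | lt_jt].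
  have -> : j = i by apply: val_inj; rewrite /= j_t.
  exact: reduce_column_reduced.
apply: eq_reduced_col (redB j lt_jt) => b le_bj a.
rewrite -val_i in lt_jt; rewrite reduce_column_col // neq_ltn.
by rewrite (leq_ltn_trans le_bj lt_jt).
Qed.

Lemma conmat_reduced A j : reduced_col (conmat_reduction e mp A) j.
Proof. by apply: (outer_loop_reduced (t := 0)); rewrite ?val_enum_ord ?subn0. Qed.

Definition unitri_col_equiv (A B : 'M['F_2]_n) : Prop :=
  exists U W, [/\ upper_unitri U, upper_unitri W, B = A *m U & A = B *m W].

Lemma add_colE B s j : add_col B s j = B *m (1%:M + delta_mx s j).
Proof.
apply/matrixP => a b; rewrite mulmxDr mulmx1 !mxE (bigD1 s) //= big1 ?addr0; last first.
  by move=> c neq_cs; rewrite mxE (negbTE neq_cs) mulr0.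
by rewrite mxE eqxx; case: eqP => [->|_]; rewrite ?mulr1 ?mulr0 ?addr0.
Qed.

Lemma unitri_col_equiv_add_col A B (s j : 'I_n) :
  (s < j)%N -> unitri_col_equiv A B -> unitri_col_equiv A (add_col B s j).
Proof.
move=> lt_sj [U [W [uU uW defB defA]]].
set E : 'M['F_2]_n := 1%:M + delta_mx s j.
have uE : upper_unitri E.
  move=> a b le_ba; rewrite !mxE (_ : _ && _ = false) ?addr0 //.
  by apply/negP => /andP[/eqP eq_as /eqP eq_bj]; move: le_ba; rewrite eq_as eq_bj leqNgt lt_sj.
have EE : E *m E = 1%:M.
  have /negbTE neq_js : j != s by rewrite eq_sym neq_ltn lt_sj.
  rewrite mulmxDl !mulmxDr !mul1mx mulmx1 mul_delta_mx_cond neq_js mulr0n.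
  by apply/matrixP => a b; rewrite !mxE addr0 -addrA F2_addxx addr0.
exists (U *m E), (E *m W); split; try exact: upper_unitri_mul.
  by rewrite add_colE defB mulmxA.
by rewrite add_colE -mulmxA (mulmxA E) EE mul1mx.
Qed.

Lemma inner_step_col_equiv A B j i :
  unitri_col_equiv A B -> unitri_col_equiv A (inner_step e mp j B i).
Proof.
rewrite /inner_step; case: ifP => // _.
by case: pickP => // s /andP[/andP[lt_sj _] _]; apply: unitri_col_equiv_add_col.
Qed.

Lemma reduce_column_col_equiv A B j :
  unitri_col_equiv A B -> unitri_col_equiv A (reduce_column e mp B j).
Proof.
rewrite /reduce_column; case: (low B j) => // l.
by elim: (filter _ _) B => //= i L IH B /(inner_step_col_equiv j i); apply: IH.
Qed.

Lemma conmat_col_equiv A : unitri_col_equiv A (conmat_reduction e mp A).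
Proof.
have : unitri_col_equiv A A by exists 1%:M, 1%:M; split; rewrite ?mulmx1 //; exact: upper_unitri1.
suff: forall L B, unitri_col_equiv A B ->
    unitri_col_equiv A (foldl (reduce_column e mp) B L) by apply.
by elim=> //= j L IH B /(reduce_column_col_equiv j); apply: IH.
Qed.

Lemma homogeneousP B j :
  homogeneous e mp B j -> exists2 i, low B j = Some i & mp (e i) = mp (e j).
Proof. by rewrite /homogeneous; case: (low B j) => // i /eqP; exists i. Qed.

Lemma unitri_col_equiv_strict_upper A B :
  (forall r c : 'I_n, A r c != 0 -> (r < c)%N) -> unitri_col_equiv A B ->
  forall r c : 'I_n, B r c != 0 -> (r < c)%N.
Proof.
move=> upA [U [W [uU _ -> _]]] r c; apply: contraR; rewrite -leqNgt => le_cr.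
rewrite mxE big1 // => b _; have [/upA lt_rb | /negPn/eqP ->] := boolP (A r b != 0).
  by rewrite (upper_unitri_lt uU) ?mulr0 // (leq_ltn_trans le_cr lt_rb).
by rewrite mul0r.
Qed.

Lemma low_target_col_span A B (j k : 'I_n) :
  A *m A = 0 -> unitri_col_equiv A B -> low B k = Some j ->
  exists2 c : 'I_n -> 'F_2, (forall m, c m != 0 -> (m < j)%N) &
    forall a, B a j = \sum_m B a m * c m.
Proof.
move=> AA0 [U [W [uU uW defB defA]]] lowk.
(* A (B[:,k] + U[:,j]) = B[:,j] since A B = A A U = 0, and u vanishes from row j on. *)
pose u b := B b k + U b j.
have u0 (b : 'I_n) : (j <= b)%N -> u b = 0.
  rewrite leq_eqVlt => /orP[/eqP/val_inj <- | lt_jb].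
    by rewrite /u (low_entry lowk) uU // eqxx F2_addxx.
  by rewrite /u (entry_above_low lowk lt_jb) (upper_unitri_lt uU lt_jb) addr0.
have Bj (a : 'I_n) : B a j = \sum_b A a b * u b.
  have ABk : \sum_b A a b * B b k = 0.
    have := congr1 (fun M : 'M['F_2]_n => M a k) (mulmxA A A U).
    by rewrite -defB AA0 mul0mx !mxE.
  rewrite /u; under eq_bigr => b _ do rewrite mulrDr.
  by rewrite big_split /= ABk add0r defB mxE.
exists (fun m => \sum_b W m b * u b) => [m | a].
  apply: contraR; rewrite -leqNgt => le_jm.
  apply/eqP; apply: big1 => b _.
  case: (ltnP b j) => [lt_bj | le_jb]; last by rewrite u0 ?mulr0.
  by rewrite (upper_unitri_lt uW (leq_trans lt_bj le_jm)) mul0r.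
rewrite Bj; under eq_bigr => b _ do rewrite {1}defA !mxE mulr_suml.
rewrite exchange_big /=; apply: eq_bigr => m _.
by rewrite mulr_sumr; apply: eq_bigr => b _; rewrite mulrA.
Qed.

Section ReducedMatrix.
Variable R : 'M['F_2]_n.
Hypothesis upR : forall r c : 'I_n, R r c != 0 -> (r < c)%N.
Hypothesis redR : forall j, reduced_col R j.
Hypothesis convex_mp : forall a b c : 'I_n,
  (a <= b <= c)%N -> mp (e a) = mp (e c) -> mp (e b) = mp (e a).

Lemma reduced_low_inj m1 m2 l :
  homogeneous e mp R m1 -> homogeneous e mp R m2 ->
  low R m1 = Some l -> low R m2 = Some l -> m1 = m2.
Proof.
move=> hom1 hom2 low1 low2; case: (ltngtP m1 m2) => [lt12 | lt21 | /val_inj //].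
  by case: (redR (low_entry low2)); exists m1.
by case: (redR (low_entry low1)); exists m2.
Qed.

Lemma homogeneous_between (r m j : 'I_n) :
  R r m != 0 -> (m <= j)%N -> mp (e r) = mp (e j) ->
  homogeneous e mp R m && (mp (e m) == mp (e j)).
Proof.
move=> Rrm le_mj mp_rj; have lt_rm := upR Rrm.
have [l lowm le_rl] := low_ge_entry Rrm.
have lt_lm : (l < m)%N by apply: upR; rewrite (low_entry lowm) oner_eq0.
have mp_mr : mp (e m) = mp (e r) by apply: convex_mp mp_rj; rewrite (ltnW lt_rm).
have mp_lr : mp (e l) = mp (e r) by apply: convex_mp (esym mp_mr); rewrite le_rl ltnW.
by rewrite /homogeneous lowm mp_lr mp_mr mp_rj eqxx.
Qed.

Lemma span_not_homogeneous j (c : 'I_n -> 'F_2) :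
  (forall m, c m != 0 -> (m < j)%N) -> (forall a, R a j = \sum_m R a m * c m) ->
  ~~ homogeneous e mp R j.
Proof.
move=> c_lt Rj; apply/negP => /homogeneousP[i lowj mp_ij].
pose S m := [&& c m != 0, homogeneous e mp R m & mp (e m) == mp (e j)].
have RSj r : mp (e r) = mp (e j) -> R r j = \sum_(m | S m) R r m * c m.
  move=> mp_rj; rewrite Rj [RHS]big_mkcond; apply: eq_bigr => m _.
  case Sm: (S m) => //; apply/eqP; apply: contraFT Sm.
  rewrite mulf_eq0 negb_or => /andP[Rrm cm].
  by rewrite /S cm (homogeneous_between Rrm) // ltnW // c_lt.
have [m0 Sm0 Rim0] : exists2 m, S m & R i m != 0.
  case: (pickP (fun m => S m && (R i m != 0))) => [m /andP[]|none]; first by exists m.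
  have : R i j != 0 by rewrite (low_entry lowj) oner_eq0.
  rewrite RSj // big1 ?eqxx // => m Sm.
  by have := none m; rewrite Sm => /negbFE/eqP ->; rewrite mul0r.
pose lv m := if low R m is Some l then val l else 0%N.
have [M SM maxM] := @arg_maxnP _ m0 S lv Sm0.
have /and3P[cM homM /eqP mp_Mj] := SM.
have [L lowM mp_LM] := homogeneousP homM.
have RLj : R L j = 1.
  rewrite RSj ?mp_LM // (bigD1 M) //= (low_entry lowM) mul1r (F2_neq0 cM).
  rewrite big1 ?addr0 // => m /andP[Sm neq_mM].
  have [/eqP -> | RLm] := boolP (R L m == 0); first by rewrite mul0r.
  have [l lowm le_Ll] := low_ge_entry RLm.
  have := maxM m Sm; rewrite /lv lowm lowM => le_lL.
  have eq_lL : l = L by apply/val_inj/eqP; rewrite eqn_leq le_Ll andbT; exact: le_lL.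
  have /and3P[_ homm _] := Sm.
  by rewrite eq_lL in lowm; rewrite (reduced_low_inj homm homM lowm lowM) eqxx in neq_mM.
have eq_Li : L = i.
  apply/val_inj/eqP; rewrite eqn_leq; apply/andP; split.
    by rewrite leqNgt; apply/negP => /(entry_above_low lowj); rewrite RLj => /eqP; rewrite oner_eq0.
  have [l0 lowm0 le_il0] := low_ge_entry Rim0.
  by have := maxM m0 Sm0; rewrite /lv lowm0 lowM; apply: leq_trans.
by case: (redR (low_entry lowj)); exists M; rewrite -eq_Li; split; rewrite ?c_lt.
Qed.

End ReducedMatrix.

Lemma admissible_morse_convex (K : {set {set V}}) (leP : rel P) :
  admissible_enumeration K leP mp e ->
  forall a b c : 'I_n, (a <= b <= c)%N -> mp (e a) = mp (e c) -> mp (e b) = mp (e a).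
Proof.
case=> _ _ _ [lelin [[[_ [anti _]] _] mono]] _ a b c /andP[le_ab le_bc] mp_ac.
by apply: anti; rewrite (mono a b le_ab) andbT mp_ac mono.
Qed.

End Reduction.

Theorem proposition4
  (V : finType) (K : {set {set V}}) (Vs : {set {set {set V}}})
  (P : finType) (leP : rel P) (mp : {set V} -> P)
  (n : nat) (e : 'I_n -> {set V}) :
  simplicial_complex K ->
  multivector_field K Vs ->
  partial_order leP ->
  morse_decomposition K Vs leP mp ->
  admissible_enumeration K leP mp e ->
  let Aout := conmat_reduction e mp (boundary_matrix e) in
  (* (R1) j |-> low(j) is a well-defined bijection J_h -> J_t *)
  ((forall j, j \in Jh e mp Aout ->
      exists2 i, low Aout j = Some i & i \in Jt e mp Aout) /\
   (forall j1 j2, j1 \in Jh e mp Aout -> j2 \in Jh e mp Aout ->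
      low Aout j1 = low Aout j2 -> j1 = j2) /\
   (forall i, i \in Jt e mp Aout ->
      exists2 j, j \in Jh e mp Aout & low Aout j = Some i)) /\
  (* (R2) *)
  (Jh e mp Aout :&: Jt e mp Aout = set0) /\
  (* (R3) *)
  (forall i j : 'I_n, Aout i j = 1 ->
     (exists2 l, low Aout j = Some l & (i <= l)%N) ->
     ~ (exists s : 'I_n, [/\ s \in Jh e mp Aout, (s < j)%N & low Aout s = Some i])).
Proof.
move=> cplxK _ _ _ adm Aout.
have [eK inj_e onto_e _ proper_lt] := adm.
have redA j : reduced_col e mp Aout j by apply: conmat_reduced.
have equivA : unitri_col_equiv (boundary_matrix e) Aout by apply: conmat_col_equiv.
have upA := unitri_col_equiv_strict_upper (boundary_strict_upper proper_lt) equivA.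
have convex := admissible_morse_convex adm.
have ddA := boundary_mulmx_self cplxK eK inj_e onto_e.
split; [split; [|split] | split].
- move=> j; rewrite inE => hom_j; have [i lowj _] := homogeneousP hom_j.
  by exists i; rewrite // inE; apply/existsP; exists j; rewrite hom_j lowj eqxx.
- move=> j1 j2; rewrite !inE => hom1 hom2 eq_low12.
  have [l low1 _] := homogeneousP hom1.
  by apply: (reduced_low_inj redA hom1 hom2 low1); rewrite -eq_low12.
- move=> i; rewrite inE => /existsP[j /andP[hom_j /eqP lowj]].
  by exists j; rewrite ?inE.
- apply/setP => j; rewrite !inE; apply/negP => /andP[hom_j /existsP[k /andP[_ /eqP lowk]]].
  have [c c_lt Aj] := low_target_col_span ddA equivA lowk.
  by move: hom_j; apply/negP; apply: (span_not_homogeneous upA redA convex c_lt Aj).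
- move=> i j Aij _ [s [hom_s lt_sj lows]]; apply: (redA j i Aij); exists s; split => //.
  by move: hom_s; rewrite inE.
Qed.
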